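(* Let $\lambda>0$ and $\theta\in(0,\pi/2)$. For each $m>0$ set $n=m\tan\theta$, $X=(\lambda,0)$, $Y=(0,0)$, $Z=(m,n)$, and let $\varphi_m(\alpha,\beta)=\frac12(\alpha^2+2b\alpha\beta+a\beta^2)+c\alpha+d\beta$ be the conic satisfying (P1) $\varphi_m(X)=\varphi_m(Y)=\varphi_m(Z)=0$ and (P2) $Y-X$ is a positive multiple of $-\nabla\varphi_m(X)$ and $Z-Y$ is a positive multiple of $-\nabla\varphi_m(Y)$. Call $\{\varphi_m=0\}$ admissible if it is an ellipse. Then the set of centers $(u,v)$ of all admissible ellipses is contained in the line $u=\frac{\lambda}{2}-\frac{\tan\theta}{2}\,v$.
   Context: The center of an ellipse $\{\varphi=0\}$ is the point where $\nabla\varphi=0$. *)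

From Stdlib Require Import Reals.
Open Scope R_scope.

Definition phi (a b c d : R) (p : R * R) : R :=
  / 2 * ((fst p) ^ 2 + 2 * b * fst p * snd p + a * (snd p) ^ 2)
  + c * fst p + d * snd p.

Definition grad_phi (a b c d : R) (p : R * R) : R * R :=
  (fst p + b * snd p + c, b * fst p + a * snd p + d).

Definition is_ellipse (S : R * R -> Prop) : Prop :=
  exists (h k t p q : R), 0 < p /\ 0 < q /\
    forall z : R * R, S z <->
      exists s : R,
        z = (h + p * cos s * cos t - q * sin s * sin t,
             k + p * cos s * sin t + q * sin s * cos t).

Definition pos_multiple (w v : R * R) : Prop :=
  exists r : R, 0 < r /\ w = (r * fst v, r * snd v).

(* Only (P1) at X and the directions in (P2) matter.  phi(X) = 0 forces
   c = -lam/2; the gradient at X being parallel to the x-axis forces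
   d = -b lam; the gradient at Y = -(c, d) = (lam/2, b lam) being parallel to
   (m, m tan theta) forces tan theta = 2 b.  The first coordinate of
   grad phi = 0 then reads u = lam/2 - b v. *)
From Stdlib Require Import Reals Lra.
Open Scope R_scope.

Lemma pos_multiple_cross (w v : R * R) :
  pos_multiple w v -> fst w * snd v = snd w * fst v.
Proof. intros [r [_ ->]]; simpl; ring. Qed.

Lemma phi_root_on_axis (a b c d lam : R) :
  lam <> 0 -> phi a b c d (lam, 0) = 0 -> c = - lam / 2.
Proof.
  unfold phi; simpl; intros Hlam Hroot.
  assert (Hfactor : lam * (lam / 2 + c) = 0) by (rewrite <- Hroot; field).
  apply Rmult_integral in Hfactor as [Hzero | Hc]; [contradiction | lra].
Qed.

Lemma grad_phi_center_fst (a b c d u v : R) :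
  grad_phi a b c d (u, v) = (0, 0) -> u = - c - b * v.
Proof. unfold grad_phi; simpl; intros Hcenter; injection Hcenter; lra. Qed.

Theorem proposition4 (lam theta : R) :
  0 < lam -> 0 < theta < PI / 2 ->
  forall (m a b c d u v : R),
    0 < m ->
    let n := m * tan theta in
    let X := (lam, 0) in
    let Y := (0, 0) in
    let Z := (m, n) in
    (* (P1) *)
    phi a b c d X = 0 -> phi a b c d Y = 0 -> phi a b c d Z = 0 ->
    (* (P2) *)
    pos_multiple (fst Y - fst X, snd Y - snd X)
      (- fst (grad_phi a b c d X), - snd (grad_phi a b c d X)) ->
    pos_multiple (fst Z - fst Y, snd Z - snd Y)
      (- fst (grad_phi a b c d Y), - snd (grad_phi a b c d Y)) ->
    (* admissible: the zero set is an ellipse *)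
    is_ellipse (fun z => phi a b c d z = 0) ->
    (* (u,v) is its center *)
    grad_phi a b c d (u, v) = (0, 0) ->
    u = lam / 2 - tan theta / 2 * v.
Proof.
  intros Hlam _ m a b c d u v Hm n X Y Z HX _ _ HdirX HdirY _ Hcenter.
  assert (Hc : c = - lam / 2) by (apply (phi_root_on_axis a b c d); [lra | exact HX]).
  apply pos_multiple_cross in HdirX, HdirY.
  unfold grad_phi, X, Y, Z, n in HdirX, HdirY; simpl in HdirX, HdirY.
  assert (Hd : d = - b * lam).
  { assert (Hfactor : lam * (b * lam + d) = 0) by lra.
    apply Rmult_integral in Hfactor as [Hzero | Hd]; lra. }
  assert (Htan : tan theta = 2 * b).
  { apply (Rmult_eq_reg_l (m * lam)); [| nra].
    rewrite Hc, Hd in HdirY. lra. }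
  rewrite (grad_phi_center_fst a b c d u v Hcenter), Hc, Htan. field.
Qed.
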